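(* Let $\alpha,\beta$ be real constants with $\alpha\neq0$ and $\alpha\beta^2-4\alpha^2\neq0$, and let $\Omega\subseteq\mathbb{R}^2$ be a domain. Consider real-valued continuously differentiable functions $a_{jk},b_{jk}$ ($j,k\in\{1,2\}$), $c_l,d_l$ ($l\in\{1,2,3\}$) on $\Omega$, and the operator sending a pair of real $C^2$ functions $(u,v)$ on $\Omega$ to $(P,Q)$ with $$P=a_{11}\partial_xu+a_{12}\partial_yu+a_{21}\partial_xv+a_{22}\partial_yv+c_1u+c_2v+c_3,$$ $$Q=b_{11}\partial_xu+b_{12}\partial_yu+b_{21}\partial_xv+b_{22}\partial_yv+d_1u+d_2v+d_3.$$ Writing $w=u+iv$, this operator, viewed as $w\mapsto P+iQ$, is associated to the Cauchy–Riemann operator $\partial_{\bar z}$ (i.e. maps holomorphic $w$ to holomorphic $P+iQ$) if and only if: $c_1+id_1$ and $c_3+id_3$ are holomorphic, $c_2=-\alpha d_1$, $d_2=c_1-\beta d_1$, and there is a holomorphic function $A_1+iA_2$ ($A_1,A_2$ real) such that $$a_{21}=-\alpha A_2+a_{12},\quad a_{22}=\alpha A_1-\alpha a_{11}-\beta a_{12},\quad b_{21}=A_1-\beta A_2+b_{12},\quad b_{22}=\alpha A_2-\alpha b_{11}-\beta b_{12},$$ the coefficients $a_{11},a_{12},b_{11},b_{12}$ being otherwise arbitrary.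
   Context: For real parameters $\alpha,\beta$, $\mathbb{C}(\alpha,\beta)$ denotes the real algebra of numbers $x+iy$ with $i^2=-\alpha-\beta i$; products are $(x_1+iy_1)(x_2+iy_2)=(x_1x_2-\alpha y_1y_2)+i(x_1y_2+x_2y_1-\beta y_1y_2)$ and conjugation is $\overline{x+iy}=x-iy$. For $w=u+iv$ with real $u,v$ depending on $(x,y)$, $\partial_{\bar z}=\tfrac12(\partial_x+i\partial_y)$, and $w$ is holomorphic if $\partial_{\bar z}w=0$, i.e. $\partial_xu-\alpha\partial_yv=0$ and $\partial_yu+\partial_xv-\beta\partial_yv=0$. An operator $\mathbf{L}$ is associated to $\partial_{\bar z}$ if $\partial_{\bar z}w=0$ implies $\partial_{\bar z}(\mathbf{L}w)=0$. *)

From Stdlib Require Import Reals.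
From Coquelicot Require Import Coquelicot.
Open Scope R_scope.

Definition open2 (U : R -> R -> Prop) : Prop :=
  forall x y, U x y -> exists eps : R, 0 < eps /\
    forall x' y', Rabs (x' - x) < eps -> Rabs (y' - y) < eps -> U x' y'.

Definition plane_domain (Om : R -> R -> Prop) : Prop :=
  (exists x y, Om x y) /\ open2 Om /\
  forall U V : R -> R -> Prop, open2 U -> open2 V ->
    (forall x y, Om x y -> U x y \/ V x y) ->
    (forall x y, Om x y -> U x y -> V x y -> False) ->
    (forall x y, Om x y -> U x y) \/ (forall x y, Om x y -> V x y).

Definition dx (f : R -> R -> R) (x y : R) : R := Derive (fun t => f t y) x.
Definition dy (f : R -> R -> R) (x y : R) : R := Derive (fun t => f x t) y.

Definition C1_on (Om : R -> R -> Prop) (f : R -> R -> R) : Prop :=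
  forall x y, Om x y ->
    ex_derive (fun t => f t y) x /\ ex_derive (fun t => f x t) y /\
    continuity_2d_pt f x y /\ continuity_2d_pt (dx f) x y /\
    continuity_2d_pt (dy f) x y.

Definition C2_on (Om : R -> R -> Prop) (f : R -> R -> R) : Prop :=
  C1_on Om f /\ C1_on Om (dx f) /\ C1_on Om (dy f).

(** w = u + i v is holomorphic on Om in C(alpha,beta):
    u, v continuously differentiable and d_{zbar} w = 0, i.e.
    u_x - alpha v_y = 0 and u_y + v_x - beta v_y = 0. *)
Definition holomorphic (alpha beta : R) (Om : R -> R -> Prop)
  (u v : R -> R -> R) : Prop :=
  C1_on Om u /\ C1_on Om v /\
  forall x y, Om x y ->
    dx u x y - alpha * dy v x y = 0 /\
    dy u x y + dx v x y - beta * dy v x y = 0.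

Definition opP (a11 a12 a21 a22 c1 c2 c3 : R -> R -> R)
  (u v : R -> R -> R) : R -> R -> R :=
  fun x y => a11 x y * dx u x y + a12 x y * dy u x y
           + a21 x y * dx v x y + a22 x y * dy v x y
           + c1 x y * u x y + c2 x y * v x y + c3 x y.

(** The operator w = u + i v |-> P + i Q is associated to d_{zbar} on Om:
    it maps every holomorphic w (with u, v of class C^2, the domain of the
    operator) to a holomorphic function. *)
Definition associated (alpha beta : R) (Om : R -> R -> Prop)
  (P Q : (R -> R -> R) -> (R -> R -> R) -> (R -> R -> R)) : Prop :=
  forall u v : R -> R -> R, C2_on Om u -> C2_on Om v ->
    holomorphic alpha beta Om u v ->
    holomorphic alpha beta Om (P u v) (Q u v).

(* The "if" direction is a computation: differentiate P and Q by the product rule and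
   eliminate the second derivatives of u and v by the Cauchy-Riemann equations and
   Schwarz's theorem; the relations then make the Cauchy-Riemann defects of (P, Q) vanish.

   For the converse, test the operator at a point z0 on holomorphic quadratic polynomials
   centred at z0, whose values and first and second derivatives at z0 can be prescribed
   subject only to the Cauchy-Riemann relations.  The tests w = 0 and w = 1 give the
   holomorphy of c1 + i d1 and c3 + i d3.  A second-order test gives two algebraic relations
   among the a's and b's; once these are differentiated, the two remaining first-order tests
   reduce to the system beta e = 2 alpha f, 2 e = beta f for e = c2 + alpha d1 and
   f = d2 - c1 + beta d1, which forces e = f = 0 because alpha (beta^2 - 4 alpha) <> 0.
   The same tests then say that A1 = (b21 - b12) + (beta / alpha) (a12 - a21) and
   A2 = (a12 - a21) / alpha form a holomorphic function. *)

From Stdlib Require Import Reals Lra List FunctionalExtensionality.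
From Coquelicot Require Import Coquelicot.
Import ListNotations.
Open Scope R_scope.

Lemma dx_of_is_derive f x y l : is_derive (fun t => f t y) x l -> dx f x y = l.
Proof. apply is_derive_unique. Qed.

Lemma dy_of_is_derive f x y l : is_derive (fun t => f x t) y l -> dy f x y = l.
Proof. apply is_derive_unique. Qed.

Lemma open2_locally_2d Om x y : open2 Om -> Om x y -> locally_2d Om x y.
Proof.
  intros HO Hp. destruct (HO x y Hp) as [eps [Heps HU]].
  exists (mkposreal eps Heps). exact HU.
Qed.

Lemma open2_locally_x Om x y : open2 Om -> Om x y -> locally x (fun t => Om t y).
Proof.
  intros HO Hp. destruct (HO x y Hp) as [eps [Heps HU]].
  exists (mkposreal eps Heps). intros t Ht. apply HU; [exact Ht |].
  rewrite Rminus_eq_0, Rabs_R0. exact Heps.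
Qed.

Lemma open2_locally_y Om x y : open2 Om -> Om x y -> locally y (fun t => Om x t).
Proof.
  intros HO Hp. destruct (HO x y Hp) as [eps [Heps HU]].
  exists (mkposreal eps Heps). intros t Ht. apply HU; [| exact Ht].
  rewrite Rminus_eq_0, Rabs_R0. exact Heps.
Qed.

Lemma dx_eq_on Om f g x y : open2 Om -> Om x y ->
  (forall s t, Om s t -> f s t = g s t) -> dx f x y = dx g x y.
Proof.
  intros HO Hp Hfg. apply Derive_ext_loc.
  eapply filter_imp; [| exact (open2_locally_x Om x y HO Hp)].
  intros t Ht. exact (Hfg t y Ht).
Qed.

Lemma dy_eq_on Om f g x y : open2 Om -> Om x y ->
  (forall s t, Om s t -> f s t = g s t) -> dy f x y = dy g x y.
Proof.
  intros HO Hp Hfg. apply Derive_ext_loc.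
  eapply filter_imp; [| exact (open2_locally_y Om x y HO Hp)].
  intros t Ht. exact (Hfg x t Ht).
Qed.

Lemma continuity_2d_pt_eq_on Om f g x y : open2 Om -> Om x y ->
  (forall s t, Om s t -> f s t = g s t) ->
  continuity_2d_pt f x y -> continuity_2d_pt g x y.
Proof.
  intros HO Hp Hfg. apply continuity_2d_pt_ext_loc.
  destruct (open2_locally_2d Om x y HO Hp) as [d Hd].
  exists d. intros s t Hs Ht. apply Hfg, Hd; assumption.
Qed.

Lemma dx_dy_comm_C2 Om f x y : open2 Om -> Om x y -> C2_on Om f ->
  dx (dy f) x y = dy (dx f) x y.
Proof.
  intros HO Hp [Hf [Hfx Hfy]]. apply Schwarz.
  - destruct (open2_locally_2d Om x y HO Hp) as [d Hd]. exists d. intros s t Hs Ht.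
    specialize (Hd s t Hs Ht).
    destruct (Hf s t Hd) as [? [? _]], (Hfx s t Hd) as [_ [? _]], (Hfy s t Hd) as [? _].
    repeat split; assumption.
  - apply (Hfy x y Hp).
  - apply (Hfx x y Hp).
Qed.

Definition lincomb (l : list (R * (R -> R -> R))) : R -> R -> R :=
  fun x y => fold_right (fun kf acc => fst kf * snd kf x y + acc) 0 l.

Definition map_lincomb (D : (R -> R -> R) -> R -> R -> R) (l : list (R * (R -> R -> R))) :=
  map (fun kf => (fst kf, D (snd kf))) l.

Lemma is_derive_lincomb_x l x y :
  List.Forall (fun kf => ex_derive (fun t => snd kf t y) x) l ->
  is_derive (fun t => lincomb l t y) x (lincomb (map_lincomb dx l) x y).
Proof.
  induction l as [| [k f] l IH]; intros Hl; simpl.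
  - exact (is_derive_const 0 _).
  - inversion_clear Hl as [| ? ? Hf Hl'].
    apply (is_derive_plus (fun t => k * f t y)); [| exact (IH Hl')].
    apply is_derive_scal, Derive_correct, Hf.
Qed.

Lemma is_derive_lincomb_y l x y :
  List.Forall (fun kf => ex_derive (fun t => snd kf x t) y) l ->
  is_derive (fun t => lincomb l x t) y (lincomb (map_lincomb dy l) x y).
Proof.
  induction l as [| [k f] l IH]; intros Hl; simpl.
  - exact (is_derive_const 0 _).
  - inversion_clear Hl as [| ? ? Hf Hl'].
    apply (is_derive_plus (fun t => k * f x t)); [| exact (IH Hl')].
    apply is_derive_scal, Derive_correct, Hf.
Qed.

Lemma continuity_2d_pt_lincomb l x y :
  List.Forall (fun kf => continuity_2d_pt (snd kf) x y) l ->
  continuity_2d_pt (lincomb l) x y.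
Proof.
  induction l as [| [k f] l IH]; intros Hl; simpl.
  - apply continuity_2d_pt_const.
  - inversion_clear Hl as [| ? ? Hf Hl'].
    apply continuity_2d_pt_plus; [| exact (IH Hl')].
    apply continuity_2d_pt_mult; [apply continuity_2d_pt_const | exact Hf].
Qed.

Section LinearCombinations.

Variables (Om : R -> R -> Prop) (l : list (R * (R -> R -> R))).
Hypotheses (HO : open2 Om) (Hl : List.Forall (fun kf => C1_on Om (snd kf)) l).

Lemma partials_lincomb x y : Om x y ->
  dx (lincomb l) x y = lincomb (map_lincomb dx l) x y /\
  dy (lincomb l) x y = lincomb (map_lincomb dy l) x y.
Proof.
  intros Hp. split.
  - apply dx_of_is_derive, is_derive_lincomb_x.
    eapply Forall_impl; [| exact Hl]. intros kf Hkf. apply (Hkf x y Hp).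
  - apply dy_of_is_derive, is_derive_lincomb_y.
    eapply Forall_impl; [| exact Hl]. intros kf Hkf. apply (Hkf x y Hp).
Qed.

Lemma C1_on_lincomb : C1_on Om (lincomb l).
Proof.
  intros x y Hp.
  assert (Hcont : forall D : (R -> R -> R) -> R -> R -> R,
            (forall f, C1_on Om f -> continuity_2d_pt (D f) x y) ->
            continuity_2d_pt (lincomb (map_lincomb D l)) x y).
  { intros D HD. apply continuity_2d_pt_lincomb, Forall_map.
    eapply Forall_impl; [| exact Hl]. intros kf Hkf. apply HD, Hkf. }
  split; [| split; [| split; [| split]]].
  - eexists. apply is_derive_lincomb_x.
    eapply Forall_impl; [| exact Hl]. intros kf Hkf. apply (Hkf x y Hp).
  - eexists. apply is_derive_lincomb_y.
    eapply Forall_impl; [| exact Hl]. intros kf Hkf. apply (Hkf x y Hp).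
  - apply continuity_2d_pt_lincomb.
    eapply Forall_impl; [| exact Hl]. intros kf Hkf. apply (Hkf x y Hp).
  - apply (continuity_2d_pt_eq_on Om (lincomb (map_lincomb dx l))); [exact HO | exact Hp | |].
    + intros s t Hst. symmetry. apply (partials_lincomb s t Hst).
    + apply Hcont. intros f Hf. apply (Hf x y Hp).
  - apply (continuity_2d_pt_eq_on Om (lincomb (map_lincomb dy l))); [exact HO | exact Hp | |].
    + intros s t Hst. symmetry. apply (partials_lincomb s t Hst).
    + apply Hcont. intros f Hf. apply (Hf x y Hp).
Qed.

Lemma partials_of_eq_lincomb f : (forall s t, Om s t -> f s t = lincomb l s t) ->
  forall x y, Om x y ->
  dx f x y = lincomb (map_lincomb dx l) x y /\ dy f x y = lincomb (map_lincomb dy l) x y.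
Proof.
  intros Hf x y Hp.
  rewrite (dx_eq_on Om f (lincomb l)), (dy_eq_on Om f (lincomb l)); auto.
  apply partials_lincomb, Hp.
Qed.

End LinearCombinations.

Ltac C1_list := repeat (apply Forall_cons; [assumption |]); apply Forall_nil.

Section Operator.

Variables (Om : R -> R -> Prop) (a11 a12 a21 a22 c1 c2 c3 u v : R -> R -> R).

Definition dx_opP x y :=
  dx a11 x y * dx u x y + a11 x y * dx (dx u) x y
  + dx a12 x y * dy u x y + a12 x y * dx (dy u) x y
  + dx a21 x y * dx v x y + a21 x y * dx (dx v) x y
  + dx a22 x y * dy v x y + a22 x y * dx (dy v) x y
  + dx c1 x y * u x y + c1 x y * dx u x y
  + dx c2 x y * v x y + c2 x y * dx v x y + dx c3 x y.

Definition dy_opP x y :=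
  dy a11 x y * dx u x y + a11 x y * dy (dx u) x y
  + dy a12 x y * dy u x y + a12 x y * dy (dy u) x y
  + dy a21 x y * dx v x y + a21 x y * dy (dx v) x y
  + dy a22 x y * dy v x y + a22 x y * dy (dy v) x y
  + dy c1 x y * u x y + c1 x y * dy u x y
  + dy c2 x y * v x y + c2 x y * dy v x y + dy c3 x y.

Hypotheses (Ha11 : C1_on Om a11) (Ha12 : C1_on Om a12) (Ha21 : C1_on Om a21)
  (Ha22 : C1_on Om a22) (Hc1 : C1_on Om c1) (Hc2 : C1_on Om c2) (Hc3 : C1_on Om c3)
  (Hu : C2_on Om u) (Hv : C2_on Om v).

Ltac C1_at x y Hp :=
  destruct Hu as [Hu0 [Hux Huy]], Hv as [Hv0 [Hvx Hvy]];
  destruct (Ha11 x y Hp) as [? [? [? [? ?]]]], (Ha12 x y Hp) as [? [? [? [? ?]]]],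
    (Ha21 x y Hp) as [? [? [? [? ?]]]], (Ha22 x y Hp) as [? [? [? [? ?]]]],
    (Hc1 x y Hp) as [? [? [? [? ?]]]], (Hc2 x y Hp) as [? [? [? [? ?]]]],
    (Hc3 x y Hp) as [? [? [? [? ?]]]], (Hu0 x y Hp) as [? [? [? [? ?]]]],
    (Hux x y Hp) as [? [? [? [? ?]]]], (Huy x y Hp) as [? [? [? [? ?]]]],
    (Hv0 x y Hp) as [? [? [? [? ?]]]], (Hvx x y Hp) as [? [? [? [? ?]]]],
    (Hvy x y Hp) as [? [? [? [? ?]]]].

Lemma dx_opP_eq x y : Om x y -> dx (opP a11 a12 a21 a22 c1 c2 c3 u v) x y = dx_opP x y.
Proof.
  intros Hp. C1_at x y Hp.
  apply dx_of_is_derive. unfold opP, dx_opP. auto_derive.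
  - repeat split; assumption.
  - unfold dx; ring.
Qed.

Lemma dy_opP_eq x y : Om x y -> dy (opP a11 a12 a21 a22 c1 c2 c3 u v) x y = dy_opP x y.
Proof.
  intros Hp. C1_at x y Hp.
  apply dy_of_is_derive. unfold opP, dy_opP. auto_derive.
  - repeat split; assumption.
  - unfold dy; ring.
Qed.

Ltac continuity_2d :=
  repeat (apply continuity_2d_pt_plus || apply continuity_2d_pt_mult); assumption.

Lemma C1_on_opP : open2 Om -> C1_on Om (opP a11 a12 a21 a22 c1 c2 c3 u v).
Proof.
  intros HO x y Hp. pose proof (dx_opP_eq) as Edx. pose proof (dy_opP_eq) as Edy.
  C1_at x y Hp. split; [| split; [| split; [| split]]].
  - unfold opP. auto_derive. repeat split; assumption.
  - unfold opP. auto_derive. repeat split; assumption.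
  - unfold opP. continuity_2d.
  - apply (continuity_2d_pt_eq_on Om dx_opP); [exact HO | exact Hp | |].
    + intros s t Hst. symmetry. apply Edx, Hst.
    + unfold dx_opP. continuity_2d.
  - apply (continuity_2d_pt_eq_on Om dy_opP); [exact HO | exact Hp | |].
    + intros s t Hst. symmetry. apply Edy, Hst.
    + unfold dy_opP. continuity_2d.
Qed.

End Operator.

Lemma holomorphic_partials alpha beta Om f g x y :
  holomorphic alpha beta Om f g -> Om x y ->
  dx f x y = alpha * dy g x y /\ dy f x y = beta * dy g x y - dx g x y.
Proof. intros [_ [_ Hcr]] Hp. destruct (Hcr x y Hp). split; lra. Qed.

Lemma holomorphic_second_partials alpha beta Om u v : open2 Om ->
  C2_on Om u -> C2_on Om v -> holomorphic alpha beta Om u v ->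
  forall x y, Om x y ->
    dx (dx u) x y = alpha * dx (dy v) x y /\
    dy (dx u) x y = alpha * dy (dy v) x y /\
    dx (dy u) x y = alpha * dy (dy v) x y /\
    dy (dy u) x y = beta * dy (dy v) x y - dx (dy v) x y /\
    dx (dx v) x y = beta * dx (dy v) x y - alpha * dy (dy v) x y /\
    dy (dx v) x y = dx (dy v) x y.
Proof.
  intros HO Cu Cv [_ [_ Hcr]] x y Hp.
  pose proof Cv as [_ [Hvx Hvy]].
  destruct (partials_of_eq_lincomb Om [(alpha, dy v)] HO ltac:(C1_list) (dx u))
    with x y as [Exx Exy]; [| exact Hp |].
  { intros s t Hst. simpl. destruct (Hcr s t Hst). lra. }
  destruct (partials_of_eq_lincomb Om [(-1, dx v); (beta, dy v)] HO ltac:(C1_list) (dy u))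
    with x y as [Eyx Eyy]; [| exact Hp |].
  { intros s t Hst. simpl. destruct (Hcr s t Hst). lra. }
  simpl in Exx, Exy, Eyx, Eyy.
  pose proof (dx_dy_comm_C2 Om u x y HO Hp Cu) as Su.
  pose proof (dx_dy_comm_C2 Om v x y HO Hp Cv) as Sv.
  repeat split; lra.
Qed.

Definition quad (k0 k1 k2 k3 k4 k5 x0 y0 : R) : R -> R -> R :=
  fun x y => k0 + k1 * (x - x0) + k2 * (y - y0) + k3 * ((x - x0) * (x - x0))
     + k4 * ((x - x0) * (y - y0)) + k5 * ((y - y0) * (y - y0)).

Lemma dx_quad k0 k1 k2 k3 k4 k5 x0 y0 :
  dx (quad k0 k1 k2 k3 k4 k5 x0 y0) = quad k1 (2 * k3) k4 0 0 0 x0 y0.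
Proof.
  extensionality x; extensionality y.
  apply dx_of_is_derive. unfold quad. auto_derive; [easy | ring].
Qed.

Lemma dy_quad k0 k1 k2 k3 k4 k5 x0 y0 :
  dy (quad k0 k1 k2 k3 k4 k5 x0 y0) = quad k2 k4 (2 * k5) 0 0 0 x0 y0.
Proof.
  extensionality x; extensionality y.
  apply dy_of_is_derive. unfold quad. auto_derive; [easy | ring].
Qed.

Lemma C1_on_quad Om k0 k1 k2 k3 k4 k5 x0 y0 : C1_on Om (quad k0 k1 k2 k3 k4 k5 x0 y0).
Proof.
  intros x y _. rewrite dx_quad, dy_quad. unfold quad.
  repeat split; try (auto_derive; easy);
    repeat (apply continuity_2d_pt_plus || apply continuity_2d_pt_minus
            || apply continuity_2d_pt_mult || apply continuity_2d_pt_const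
            || apply continuity_2d_pt_id1 || apply continuity_2d_pt_id2).
Qed.

Lemma C2_on_quad Om k0 k1 k2 k3 k4 k5 x0 y0 : C2_on Om (quad k0 k1 k2 k3 k4 k5 x0 y0).
Proof. split; [| split]; rewrite ?dx_quad, ?dy_quad; apply C1_on_quad. Qed.

Lemma holomorphic_quad alpha beta Om k0 k1 k2 k3 k4 k5 m0 m1 m2 m3 m4 m5 x0 y0 :
  k1 = alpha * m2 -> 2 * k3 = alpha * m4 -> k4 = 2 * alpha * m5 ->
  k2 + m1 - beta * m2 = 0 -> k4 + 2 * m3 - beta * m4 = 0 -> 2 * k5 + m4 - 2 * beta * m5 = 0 ->
  holomorphic alpha beta Om (quad k0 k1 k2 k3 k4 k5 x0 y0) (quad m0 m1 m2 m3 m4 m5 x0 y0).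
Proof.
  intros e1 e2 e3 e4 e5 e6. split; [apply C1_on_quad | split; [apply C1_on_quad |]].
  intros x y _. rewrite !dx_quad, !dy_quad. unfold quad. split.
  - rewrite e1, e3. replace (2 * k3) with (alpha * m4) by lra. ring.
  - replace k2 with (beta * m2 - m1) by lra. replace k4 with (beta * m4 - 2 * m3) by lra.
    replace (2 * k5) with (2 * beta * m5 - m4) by lra. ring.
Qed.

Definition dx_opP_center (a11 a12 a21 a22 c1 c2 c3 : R -> R -> R)
  (k0 k1 k2 k3 k4 k5 m0 m1 m2 m3 m4 m5 x y : R) : R :=
  dx a11 x y * k1 + a11 x y * (2 * k3) + dx a12 x y * k2 + a12 x y * k4
  + dx a21 x y * m1 + a21 x y * (2 * m3) + dx a22 x y * m2 + a22 x y * m4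
  + dx c1 x y * k0 + c1 x y * k1 + dx c2 x y * m0 + c2 x y * m1 + dx c3 x y.

Definition dy_opP_center (a11 a12 a21 a22 c1 c2 c3 : R -> R -> R)
  (k0 k1 k2 k3 k4 k5 m0 m1 m2 m3 m4 m5 x y : R) : R :=
  dy a11 x y * k1 + a11 x y * k4 + dy a12 x y * k2 + a12 x y * (2 * k5)
  + dy a21 x y * m1 + a21 x y * m4 + dy a22 x y * m2 + a22 x y * (2 * m5)
  + dy c1 x y * k0 + c1 x y * k2 + dy c2 x y * m0 + c2 x y * m2 + dy c3 x y.

Lemma dx_opP_quad a11 a12 a21 a22 c1 c2 c3 k0 k1 k2 k3 k4 k5 m0 m1 m2 m3 m4 m5 x y :
  dx_opP a11 a12 a21 a22 c1 c2 c3 (quad k0 k1 k2 k3 k4 k5 x y) (quad m0 m1 m2 m3 m4 m5 x y) x y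
  = dx_opP_center a11 a12 a21 a22 c1 c2 c3 k0 k1 k2 k3 k4 k5 m0 m1 m2 m3 m4 m5 x y.
Proof.
  unfold dx_opP, dx_opP_center. repeat (rewrite dx_quad || rewrite dy_quad). unfold quad; cbv beta. ring.
Qed.

Lemma dy_opP_quad a11 a12 a21 a22 c1 c2 c3 k0 k1 k2 k3 k4 k5 m0 m1 m2 m3 m4 m5 x y :
  dy_opP a11 a12 a21 a22 c1 c2 c3 (quad k0 k1 k2 k3 k4 k5 x y) (quad m0 m1 m2 m3 m4 m5 x y) x y
  = dy_opP_center a11 a12 a21 a22 c1 c2 c3 k0 k1 k2 k3 k4 k5 m0 m1 m2 m3 m4 m5 x y.
Proof.
  unfold dy_opP, dy_opP_center. repeat (rewrite dx_quad || rewrite dy_quad). unfold quad; cbv beta. ring.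
Qed.

Lemma test_system_trivial a b p q e f : a <> 0 -> a * b ^ 2 - 4 * a ^ 2 <> 0 ->
  p = e -> q = - f -> a * q = a * f - b * e -> p + b * q = - e ->
  p = 0 /\ q = 0 /\ e = 0 /\ f = 0.
Proof.
  intros Ha Hdisc -> -> H1 H2.
  assert (Hbe : b * e = 2 * a * f) by lra.
  assert (Hbf : b * f = 2 * e) by lra.
  assert (Hf : (a * b ^ 2 - 4 * a ^ 2) * f = 0).
  { replace ((a * b ^ 2 - 4 * a ^ 2) * f) with (a * b * (b * f) - 2 * a * (2 * a * f)) by ring.
    rewrite Hbf, <- Hbe. ring. }
  apply Rmult_integral in Hf as [Hf | Hf]; [contradiction |].
  subst f. assert (e = 0) by lra. subst e. repeat split; lra.
Qed.

Section Association.

Variables (alpha beta : R) (Om : R -> R -> Prop)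
  (a11 a12 a21 a22 b11 b12 b21 b22 c1 c2 c3 d1 d2 d3 : R -> R -> R).

Hypotheses (HO : open2 Om)
  (Ha11 : C1_on Om a11) (Ha12 : C1_on Om a12) (Ha21 : C1_on Om a21) (Ha22 : C1_on Om a22)
  (Hb11 : C1_on Om b11) (Hb12 : C1_on Om b12) (Hb21 : C1_on Om b21) (Hb22 : C1_on Om b22)
  (Hc1 : C1_on Om c1) (Hc2 : C1_on Om c2) (Hc3 : C1_on Om c3)
  (Hd1 : C1_on Om d1) (Hd2 : C1_on Om d2) (Hd3 : C1_on Om d3).

Definition association_conditions : Prop :=
  holomorphic alpha beta Om c1 d1 /\
  holomorphic alpha beta Om c3 d3 /\
  (forall x y, Om x y ->
     c2 x y = - alpha * d1 x y /\ d2 x y = c1 x y - beta * d1 x y) /\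
  exists A1 A2 : R -> R -> R,
    holomorphic alpha beta Om A1 A2 /\
    forall x y, Om x y ->
      a21 x y = - alpha * A2 x y + a12 x y /\
      a22 x y = alpha * A1 x y - alpha * a11 x y - beta * a12 x y /\
      b21 x y = A1 x y - beta * A2 x y + b12 x y /\
      b22 x y = alpha * A2 x y - alpha * b11 x y - beta * b12 x y.

Let P := opP a11 a12 a21 a22 c1 c2 c3.
Let Q := opP b11 b12 b21 b22 d1 d2 d3.

Lemma associated_of_conditions : association_conditions -> associated alpha beta Om P Q.
Proof.
  intros [Hcd1 [Hcd3 [Hcd [A1 [A2 [HA Hrel]]]]]] u v Cu Cv Huv.
  pose proof HA as [HA1 [HA2 _]].
  split; [| split]; [apply C1_on_opP; assumption .. |].
  intros x y Hp. subst P Q.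
  rewrite (dx_opP_eq Om a11), (dy_opP_eq Om a11), (dx_opP_eq Om b11), (dy_opP_eq Om b11);
    try assumption.
  assert (Hpartials : forall f l, List.Forall (fun kf => C1_on Om (snd kf)) l ->
            (forall s t, Om s t -> f s t = lincomb l s t) ->
            dx f x y = lincomb (map_lincomb dx l) x y /\
            dy f x y = lincomb (map_lincomb dy l) x y).
  { intros f l Hl Hf. exact (partials_of_eq_lincomb Om l HO Hl f Hf x y Hp). }
  destruct (Hpartials a21 [(-alpha, A2); (1, a12)]) as [E1 E2]; [C1_list | |].
  { intros s t Hst. destruct (Hrel s t Hst) as [? _]. simpl. lra. }
  destruct (Hpartials a22 [(alpha, A1); (-alpha, a11); (-beta, a12)]) as [E3 E4]; [C1_list | |].
  { intros s t Hst. destruct (Hrel s t Hst) as [_ [? _]]. simpl. lra. }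
  destruct (Hpartials b21 [(1, A1); (-beta, A2); (1, b12)]) as [E5 E6]; [C1_list | |].
  { intros s t Hst. destruct (Hrel s t Hst) as [_ [_ [? _]]]. simpl. lra. }
  destruct (Hpartials b22 [(alpha, A2); (-alpha, b11); (-beta, b12)]) as [E7 E8]; [C1_list | |].
  { intros s t Hst. destruct (Hrel s t Hst) as [_ [_ [_ ?]]]. simpl. lra. }
  destruct (Hpartials c2 [(-alpha, d1)]) as [E9 E10]; [C1_list | |].
  { intros s t Hst. destruct (Hcd s t Hst) as [? _]. simpl. lra. }
  destruct (Hpartials d2 [(1, c1); (-beta, d1)]) as [E11 E12]; [C1_list | |].
  { intros s t Hst. destruct (Hcd s t Hst) as [_ ?]. simpl. lra. }
  simpl in E1, E2, E3, E4, E5, E6, E7, E8, E9, E10, E11, E12.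
  destruct (Hrel x y Hp) as [V1 [V2 [V3 V4]]], (Hcd x y Hp) as [V5 V6].
  destruct (holomorphic_partials alpha beta Om u v x y Huv Hp) as [F1 F2],
    (holomorphic_partials alpha beta Om A1 A2 x y HA Hp) as [F3 F4],
    (holomorphic_partials alpha beta Om c1 d1 x y Hcd1 Hp) as [F5 F6],
    (holomorphic_partials alpha beta Om c3 d3 x y Hcd3 Hp) as [F7 F8].
  destruct (holomorphic_second_partials alpha beta Om u v HO Cu Cv Huv x y Hp)
    as [S1 [S2 [S3 [S4 [S5 S6]]]]].
  unfold dx_opP, dy_opP.
  rewrite E1, E2, E3, E4, E5, E6, E7, E8, E9, E10, E11, E12, V1, V2, V3, V4, V5, V6.
  rewrite F1, F2, F3, F4, F5, F6, F7, F8, S1, S2, S3, S4, S5, S6.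
  split; ring.
Qed.

Hypothesis Hass : associated alpha beta Om P Q.

Lemma associated_quad_test k0 k1 k2 k3 k4 k5 m0 m1 m2 m3 m4 m5 x y :
  k1 = alpha * m2 -> 2 * k3 = alpha * m4 -> k4 = 2 * alpha * m5 ->
  k2 + m1 - beta * m2 = 0 -> k4 + 2 * m3 - beta * m4 = 0 -> 2 * k5 + m4 - 2 * beta * m5 = 0 ->
  Om x y ->
  dx_opP_center a11 a12 a21 a22 c1 c2 c3 k0 k1 k2 k3 k4 k5 m0 m1 m2 m3 m4 m5 x y
  - alpha * dy_opP_center b11 b12 b21 b22 d1 d2 d3 k0 k1 k2 k3 k4 k5 m0 m1 m2 m3 m4 m5 x y = 0 /\
  dy_opP_center a11 a12 a21 a22 c1 c2 c3 k0 k1 k2 k3 k4 k5 m0 m1 m2 m3 m4 m5 x y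
  + dx_opP_center b11 b12 b21 b22 d1 d2 d3 k0 k1 k2 k3 k4 k5 m0 m1 m2 m3 m4 m5 x y
  - beta * dy_opP_center b11 b12 b21 b22 d1 d2 d3 k0 k1 k2 k3 k4 k5 m0 m1 m2 m3 m4 m5 x y = 0.
Proof.
  intros h1 h2 h3 h4 h5 h6 Hp.
  pose proof (C2_on_quad Om k0 k1 k2 k3 k4 k5 x y) as Cu.
  pose proof (C2_on_quad Om m0 m1 m2 m3 m4 m5 x y) as Cv.
  destruct (Hass _ _ Cu Cv
    (holomorphic_quad alpha beta Om _ _ _ _ _ _ _ _ _ _ _ _ x y h1 h2 h3 h4 h5 h6))
    as [_ [_ Hcr]].
  destruct (Hcr x y Hp) as [E1 E2]. subst P Q.
  rewrite (dx_opP_eq Om a11), (dy_opP_eq Om b11), dx_opP_quad, dy_opP_quad in E1;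
    try assumption.
  rewrite (dy_opP_eq Om a11), (dx_opP_eq Om b11), (dy_opP_eq Om b11),
    dy_opP_quad, dx_opP_quad, dy_opP_quad in E2; try assumption.
  split; assumption.
Qed.

Lemma coefficient_relations x y : Om x y ->
  a22 x y = - alpha * a11 x y - beta * a21 x y - alpha * b12 x y + alpha * b21 x y /\
  b22 x y = a12 x y - a21 x y - alpha * b11 x y - beta * b12 x y.
Proof.
  intros Hp.
  (* the tests w = 0 and w = (y^2 - alpha x^2, - beta x^2 - 2 x y), centred at (x, y) *)
  destruct (associated_quad_test 0 0 0 0 0 0 0 0 0 0 0 0 x y) as [E1 E2];
    [lra .. | exact Hp |].
  destruct (associated_quad_test 0 0 0 (- alpha) 0 1 0 0 0 (- beta) (-2) 0 x y) as [Z1 Z2];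
    [lra .. | exact Hp |].
  unfold dx_opP_center, dy_opP_center in E1, E2, Z1, Z2. split; lra.
Qed.

Lemma coefficient_relation_partials x y : Om x y ->
  dx a22 x y = - alpha * dx a11 x y - beta * dx a21 x y - alpha * dx b12 x y + alpha * dx b21 x y /\
  dy a22 x y = - alpha * dy a11 x y - beta * dy a21 x y - alpha * dy b12 x y + alpha * dy b21 x y /\
  dx b22 x y = dx a12 x y - dx a21 x y - alpha * dx b11 x y - beta * dx b12 x y /\
  dy b22 x y = dy a12 x y - dy a21 x y - alpha * dy b11 x y - beta * dy b12 x y.
Proof.
  intros Hp.
  destruct (partials_of_eq_lincomb Om [(- alpha, a11); (- beta, a21); (- alpha, b12); (alpha, b21)]
              HO ltac:(C1_list) a22) with x y as [E1 E2]; [| exact Hp |].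
  { intros s t Hst. simpl. destruct (coefficient_relations s t Hst). lra. }
  destruct (partials_of_eq_lincomb Om [(1, a12); (-1, a21); (- alpha, b11); (- beta, b12)]
              HO ltac:(C1_list) b22) with x y as [E3 E4]; [| exact Hp |].
  { intros s t Hst. simpl. destruct (coefficient_relations s t Hst). lra. }
  simpl in E1, E2, E3, E4. repeat split; lra.
Qed.

Lemma linear_test_relations x y : Om x y ->
  let e := c2 x y + alpha * d1 x y in
  let f := d2 x y - c1 x y + beta * d1 x y in
  let p := dx a12 x y - dx a21 x y + alpha * (dy b21 x y - dy b12 x y) in
  let q := dx b21 x y - dx b12 x y - (dy a12 x y - dy a21 x y) - beta * (dy b21 x y - dy b12 x y) in
  p = e /\ q = - f /\ alpha * q = alpha * f - beta * e /\ p + beta * q = - e.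
Proof.
  intros Hp e f p q.
  (* the tests w = 0, w = (y, - x) and w = (alpha x, beta x + y), centred at (x, y) *)
  destruct (associated_quad_test 0 0 0 0 0 0 0 0 0 0 0 0 x y) as [E1 E2];
    [lra .. | exact Hp |].
  destruct (associated_quad_test 0 0 1 0 0 0 0 (-1) 0 0 0 0 x y) as [Z1 Z2];
    [lra .. | exact Hp |].
  destruct (associated_quad_test 0 alpha 0 0 0 0 0 beta 1 0 0 0 x y) as [W1 W2];
    [lra .. | exact Hp |].
  destruct (coefficient_relations x y Hp) as [R1 R2].
  destruct (coefficient_relation_partials x y Hp) as [R3 [R4 [R5 R6]]].
  unfold dx_opP_center, dy_opP_center in E1, E2, Z1, Z2, W1, W2.
  rewrite R1, R2, R3, R4, R5, R6 in *.
  subst e f p q. repeat split; lra.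
Qed.

Lemma holomorphic_constant_terms :
  holomorphic alpha beta Om c1 d1 /\ holomorphic alpha beta Om c3 d3.
Proof.
  assert (Hcr : forall x y, Om x y ->
    (dx c1 x y - alpha * dy d1 x y = 0 /\ dy c1 x y + dx d1 x y - beta * dy d1 x y = 0) /\
    (dx c3 x y - alpha * dy d3 x y = 0 /\ dy c3 x y + dx d3 x y - beta * dy d3 x y = 0)).
  { intros x y Hp.
    destruct (associated_quad_test 0 0 0 0 0 0 0 0 0 0 0 0 x y) as [E1 E2];
      [lra .. | exact Hp |].
    destruct (associated_quad_test 1 0 0 0 0 0 0 0 0 0 0 0 x y) as [U1 U2];
      [lra .. | exact Hp |].
    unfold dx_opP_center, dy_opP_center in E1, E2, U1, U2. repeat split; lra. }
  split; (split; [assumption | split; [assumption | intros x y Hp; apply (Hcr x y Hp)]]).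
Qed.

Lemma conditions_of_associated : alpha <> 0 -> alpha * beta ^ 2 - 4 * alpha ^ 2 <> 0 ->
  association_conditions.
Proof.
  intros Ha Hdisc.
  assert (Hsys : forall x y, Om x y ->
    dx a12 x y = dx a21 x y - alpha * (dy b21 x y - dy b12 x y) /\
    dx b21 x y = dx b12 x y + (dy a12 x y - dy a21 x y) + beta * (dy b21 x y - dy b12 x y) /\
    c2 x y = - alpha * d1 x y /\ d2 x y = c1 x y - beta * d1 x y).
  { intros x y Hp. destruct (linear_test_relations x y Hp) as [H1 [H2 [H3 H4]]].
    destruct (test_system_trivial _ _ _ _ _ _ Ha Hdisc H1 H2 H3 H4) as [? [? [? ?]]].
    repeat split; lra. }
  destruct holomorphic_constant_terms as [Hcd1 Hcd3].
  split; [exact Hcd1 | split; [exact Hcd3 | split]].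
  { intros x y Hp. apply (Hsys x y Hp). }
  set (l1 := [(1, b21); (-1, b12); (beta / alpha, a12); (- (beta / alpha), a21)]).
  set (l2 := [(/ alpha, a12); (- / alpha, a21)]).
  assert (Hl1 : List.Forall (fun kf => C1_on Om (snd kf)) l1) by C1_list.
  assert (Hl2 : List.Forall (fun kf => C1_on Om (snd kf)) l2) by C1_list.
  exists (lincomb l1), (lincomb l2). split.
  - split; [exact (C1_on_lincomb Om l1 HO Hl1) |].
    split; [exact (C1_on_lincomb Om l2 HO Hl2) |].
    intros x y Hp.
    destruct (partials_lincomb Om l1 Hl1 x y Hp) as [-> ->].
    destruct (partials_lincomb Om l2 Hl2 x y Hp) as [-> ->].
    unfold l1, l2; simpl. destruct (Hsys x y Hp) as [-> [-> _]].
    split; field; exact Ha.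
  - intros x y Hp. unfold lincomb, l1, l2; simpl.
    destruct (coefficient_relations x y Hp) as [-> ->].
    repeat split; field; exact Ha.
Qed.

End Association.

Theorem lemma2 (alpha beta : R) (Om : R -> R -> Prop)
  (a11 a12 a21 a22 b11 b12 b21 b22 c1 c2 c3 d1 d2 d3 : R -> R -> R) :
  alpha <> 0 ->
  alpha * beta ^ 2 - 4 * alpha ^ 2 <> 0 ->
  plane_domain Om ->
  C1_on Om a11 -> C1_on Om a12 -> C1_on Om a21 -> C1_on Om a22 ->
  C1_on Om b11 -> C1_on Om b12 -> C1_on Om b21 -> C1_on Om b22 ->
  C1_on Om c1 -> C1_on Om c2 -> C1_on Om c3 ->
  C1_on Om d1 -> C1_on Om d2 -> C1_on Om d3 ->
  (associated alpha beta Om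
      (opP a11 a12 a21 a22 c1 c2 c3)
      (opP b11 b12 b21 b22 d1 d2 d3)
   <->
   (holomorphic alpha beta Om c1 d1 /\
    holomorphic alpha beta Om c3 d3 /\
    (forall x y, Om x y ->
       c2 x y = - alpha * d1 x y /\ d2 x y = c1 x y - beta * d1 x y) /\
    exists A1 A2 : R -> R -> R,
      holomorphic alpha beta Om A1 A2 /\
      forall x y, Om x y ->
        a21 x y = - alpha * A2 x y + a12 x y /\
        a22 x y = alpha * A1 x y - alpha * a11 x y - beta * a12 x y /\
        b21 x y = A1 x y - beta * A2 x y + b12 x y /\
        b22 x y = alpha * A2 x y - alpha * b11 x y - beta * b12 x y)).
Proof.
  intros Ha Hdisc [_ [HO _]] Ha11 Ha12 Ha21 Ha22 Hb11 Hb12 Hb21 Hb22 Hc1 Hc2 Hc3 Hd1 Hd2 Hd3.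
  split.
  - intros Hass. apply conditions_of_associated; assumption.
  - apply associated_of_conditions; assumption.
Qed.
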